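(* Let $s\ge1$ be an integer and let $(G,Z)$ be a plantation. Then there is a dyadic plantation $(G',Z')$ with $|G'|\le|G|$ and $|Z'|\le|Z|$ such that $n(G,Z)\le n(G',Z')$.
   Context: Graphs are finite and simple; $|G|$ is the number of vertices. Two subgraphs are anticomplete if their vertex sets are disjoint and no edge joins them. $G$ is $s\mathcal{O}$-free if no $s$ cycles of $G$ are pairwise vertex-disjoint and pairwise anticomplete. $Z\subseteq V(G)$ is cycle-hitting if every cycle of $G$ has a vertex in $Z$. A plantation is a pair $(G,Z)$ with $G$ an $s\mathcal{O}$-free graph and $Z$ cycle-hitting. $(G,Z)$ is dyadic if $Z$ is stable and every vertex of $V(G)\setminus Z$ has at most two neighbours in $Z$. $n(G,Z)$ denotes the number of induced paths $P$ of $G$ with $Z\subseteq V(P)$ and both ends of $P$ in $Z$. *)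

(* Simple graphs: a symmetric irreflexive relation e on a finType T. *)
From mathcomp Require Import all_boot.
Set Implicit Arguments. Unset Strict Implicit. Unset Printing Implicit Defensive.

Section Graphs.
Variables (T : finType) (e : rel T).

(* A cycle of G, given by its cyclic vertex sequence: at least 3 distinct
   vertices, consecutive ones (and last/first) adjacent.  Not necessarily induced. *)
Definition is_cycle (c : seq T) : bool :=
  [&& uniq c, 2 < size c & cycle e c].

Definition anticomplete (A B : seq T) : Prop :=
  forall x y, x \in A -> y \in B -> x != y /\ ~~ e x y.

Definition sO_free (s : nat) : Prop :=
  ~ exists C : 'I_s -> seq T,
      (forall i, is_cycle (C i)) /\
      (forall i j, i != j -> anticomplete (C i) (C j)).

Definition cycle_hitting (Z : {set T}) : Prop :=
  forall c, is_cycle c -> exists2 z, z \in Z & z \in c.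

Definition plantation (s : nat) (Z : {set T}) : Prop :=
  sO_free s /\ cycle_hitting Z.

Definition stable (Z : {set T}) : Prop :=
  forall x y, x \in Z -> y \in Z -> ~~ e x y.

Definition dyadic (Z : {set T}) : Prop :=
  stable Z /\ forall v, v \notin Z -> #|[set z in Z | e v z]| <= 2.

Definition ends_in (Z : {set T}) (p : seq T) : bool :=
  if p is x :: r then (x \in Z) && (last x r \in Z) else false.

(* An induced path is an induced
   subgraph, hence determined by its vertex set. *)
Definition ind_path_through (Z : {set T}) (X : {set T}) : bool :=
  [exists t : #|X|.-tuple T,
    [&& uniq t, [set x in t] == X, ends_in Z t, Z \subset X &
     [forall i : 'I_#|X|, forall j : 'I_#|X|,
        e (tnth t i) (tnth t j) == ((i.+1 == j :> nat) || (j.+1 == i :> nat))]]].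

Definition n_paths (Z : {set T}) : nat :=
  #|[set X : {set T} | ind_path_through Z X]|.

End Graphs.

From mathcomp Require Import all_boot zify.
Set Implicit Arguments. Unset Strict Implicit. Unset Printing Implicit Defensive.

(* If two vertices z1, z2 of Z are adjacent, contract the edge z1z2 and drop z2 from Z.
   An induced path containing Z passes through the edge z1z2, so it contracts to an
   induced path containing Z - z2, injectively.  Every cycle of the contracted graph
   lifts to a cycle of G whose vertices map into it (through z1 one re-inserts z1,
   z2 or both), hence anticomplete packings of cycles and hitting sets transfer back.
   Repeating this makes Z stable.  Then isolate each vertex outside Z with three or
   more neighbours in Z: a vertex of an induced path has at most two neighbours on
   it, so it lies on no induced path containing Z, and isolating vertices only
   destroys cycles.  Contracted and isolated vertices are kept, so the vertex set
   never changes. *)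

Definition consecutive (i j : nat) : bool := (i.+1 == j) || (j.+1 == i).

Lemma consecutiveC i j : consecutive i j = consecutive j i.
Proof. by rewrite /consecutive orbC. Qed.

Lemma consecutivenn i : consecutive i i = false.
Proof. rewrite /consecutive; lia. Qed.

Lemma consecutive_unbump h k a b : consecutive h k ->
  a != h -> b != h -> a != k -> b != k ->
  consecutive (unbump h a) (unbump h b) = consecutive a b.
Proof. rewrite /consecutive /unbump; case: ltnP; case: ltnP; lia. Qed.

Lemma consecutive_unbump_merge h k b : consecutive h k -> b != h -> b != k ->
  consecutive (unbump h k) (unbump h b) = consecutive k b || consecutive h b.
Proof. rewrite /consecutive /unbump; case: ltnP; case: ltnP; lia. Qed.

Section SeqRem.
Variable T : eqType.

Lemma nth_rem (x0 y : T) t i : nth x0 (rem y t) i = nth x0 t (bump (index y t) i).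
Proof.
elim: t i => [|x t IHt] i /=; first by rewrite !nth_nil.
by case: eqP => _; case: i => [|i] //=; rewrite ?IHt ?bumpS.
Qed.

Lemma index_rem (x y : T) t : x != y ->
  index x (rem y t) = unbump (index y t) (index x t).
Proof.
move=> xy; elim: t => [|z t IHt] /=; first by rewrite /unbump ltnn subn0.
have [->|zy] /= := eqVneq z y; first by rewrite eq_sym (negbTE xy) /unbump subn1.
by case: eqP => //= _; rewrite IHt unbumpS.
Qed.

End SeqRem.

Section InducedPaths.
Variable T : finType.
Implicit Types (r : rel T) (Z X : {set T}) (t : seq T).

Lemma ends_inE Z x0 t : ends_in Z t =
  [&& 0 < size t, nth x0 t 0 \in Z & nth x0 t (size t).-1 \in Z].
Proof. by case: t => [|x t] //=; rewrite nth_last. Qed.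

Definition induced_path r t : Prop :=
  uniq t /\ {in t &, forall x y, r x y = consecutive (index x t) (index y t)}.

Definition path_through r Z t : Prop :=
  [/\ induced_path r t, ends_in Z t & {subset Z <= t}].

Lemma ind_path_throughP r Z X :
  ind_path_through r Z X <-> exists2 t, path_through r Z t & X = [set x in t].
Proof.
split=> [/existsP[t /and5P[ut /eqP tX ends sZX /forallP adj]] | [t [[ut adj] ends sZt] ->]].
- exists t; last by rewrite tX.
  split=> // [|z /(subsetP sZX)]; last by rewrite -{1}tX inE.
  split=> // x y xt yt.
  have ltx : index x t < #|X| by move: xt; rewrite -index_mem size_tuple.
  have lty : index y t < #|X| by move: yt; rewrite -index_mem size_tuple.
  move/forallP/(_ (Ordinal lty))/eqP: (adj (Ordinal ltx)).
  by rewrite !(tnth_nth x) !nth_index.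
- have sz : size t == #|[set x in t]| by rewrite cardsE (card_uniqP ut).
  apply/existsP; exists (Tuple sz); apply/and5P.
  split; [exact: ut | by [] | exact: ends | by apply/subsetP=> z /sZt; rewrite inE |].
  have idx k : index (tnth (Tuple sz) k) t = k.
    by rewrite (tnth_nth (tnth (Tuple sz) k)) index_uniq // size_tuple.
  apply/forallP=> i; apply/forallP=> j.
  by rewrite adj ?mem_tnth // !idx.
Qed.

Lemma n_paths_le r r' Z Z' (f : {set T} -> {set T}) :
  {in ind_path_through r Z &, injective f} ->
  (forall X, ind_path_through r Z X -> ind_path_through r' Z' (f X)) ->
  n_paths r Z <= n_paths r' Z'.
Proof.
move=> f_inj f_path; rewrite /n_paths -(card_in_imset (f := f)).
  apply/subset_leq_card/subsetP=> Y /imsetP[X]; rewrite inE => /f_path ? ->.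
  by rewrite inE.
by move=> X Y; rewrite !inE; apply: f_inj.
Qed.

Lemma induced_path_degree r t x (A : {set T}) : induced_path r t -> x \in t ->
  {subset A <= t} -> #|[set y in A | r x y]| <= 2.
Proof.
case=> _ adj xt sAt.
pose i := index x t.
apply: leq_trans (_ : #|[set nth x t i.-1; nth x t i.+1]| <= 2); last first.
  by rewrite cards2; case: (_ != _).
apply/subset_leq_card/subsetP=> y; rewrite !inE => /andP[/sAt yt].
rewrite adj // /consecutive => /orP[]/eqP iy.
- by rewrite /i iy nth_index // eqxx orbT.
- by rewrite /i -iy /= nth_index // eqxx.
Qed.

End InducedPaths.

Lemma is_cycle_rot (T : finType) (r : rel T) k c : is_cycle r (rot k c) = is_cycle r c.
Proof. by rewrite /is_cycle rot_uniq size_rot rot_cycle. Qed.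

Lemma sO_free_transfer (T : finType) (r r' : rel T) s (lift : seq T -> seq T -> Prop) :
  (forall c, is_cycle r' c -> exists2 L, is_cycle r L & lift c L) ->
  (forall c d L M, anticomplete r' c d -> lift c L -> lift d M -> anticomplete r L M) ->
  sO_free r s -> sO_free r' s.
Proof.
move=> lift_cycle lift_anti free [C [cycC antiC]]; apply: free.
have [C' cycC' liftC'] := fin_all_exists2 (fun i => lift_cycle _ (cycC i)).
by exists C'; split=> // i j ij; apply: lift_anti (antiC i j ij) (liftC' i) (liftC' j).
Qed.

Section Restriction.
Variables (T : finType) (P : pred T) (r : rel T).

Definition restrict_rel : rel T := fun x y => [&& P x, P y & r x y].

Lemma restrict_rel_sym : symmetric r -> symmetric restrict_rel.
Proof. by move=> rsym x y; rewrite /restrict_rel rsym andbCA. Qed.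

Lemma restrict_rel_irr : irreflexive r -> irreflexive restrict_rel.
Proof. by move=> rirr x; rewrite /restrict_rel rirr !andbF. Qed.

Lemma eq_in_restrict_rel : {in P &, restrict_rel =2 r}.
Proof. by move=> x y Px Py; rewrite /restrict_rel (Px : P x) (Py : P y). Qed.

Lemma is_cycle_restrict_rel c : is_cycle restrict_rel c -> all P c && is_cycle r c.
Proof.
case/and3P=> uc szc cyc.
have Pc : all P c by apply/allP=> x /(next_cycle cyc)/andP[].
by rewrite Pc /is_cycle uc szc -(eq_in_cycle eq_in_restrict_rel Pc).
Qed.

Lemma sO_free_restrict_rel s : sO_free r s -> sO_free restrict_rel s.
Proof.
apply: (sO_free_transfer (lift := fun c L => L = c /\ all P c)).
  by move=> c /is_cycle_restrict_rel/andP[Pc cyc]; exists c.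
move=> c d _ _ anti [-> /allP Pc] [-> /allP Pd] x y xc yd.
by rewrite -eq_in_restrict_rel; [apply: anti | exact: Pc | exact: Pd].
Qed.

Lemma cycle_hitting_restrict_rel Z : cycle_hitting r Z -> cycle_hitting restrict_rel Z.
Proof. by move=> hit c /is_cycle_restrict_rel/andP[_ /hit]. Qed.

Lemma induced_path_restrict_rel t :
  all P t -> induced_path r t -> induced_path restrict_rel t.
Proof.
move=> /allP Pt [ut adj]; split=> // x y xt yt.
by rewrite eq_in_restrict_rel ?adj //; apply: Pt.
Qed.

End Restriction.

Section Pruning.
Variables (T : finType) (e : rel T) (Z : {set T}).

Definition overloaded : pred T :=
  fun v => (v \notin Z) && (2 < #|[set z in Z | e v z]|).

Definition prune : rel T := restrict_rel (predC overloaded) e.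

Lemma prune_plantation s : plantation e s Z -> plantation prune s Z.
Proof.
case=> free hit; split; first exact: sO_free_restrict_rel.
exact: cycle_hitting_restrict_rel.
Qed.

Lemma prune_dyadic : stable e Z -> dyadic prune Z.
Proof.
move=> stab; split=> [x y xZ yZ | v vZ].
  by rewrite /prune /restrict_rel (negbTE (stab x y xZ yZ)) !andbF.
have [ov | nov] := boolP (overloaded v).
  rewrite (_ : [set z in Z | prune v z] = set0) ?cards0 //.
  by apply/setP=> z; rewrite !inE /prune /restrict_rel /= ov andbF.
apply: leq_trans (_ : #|[set z in Z | e v z]| <= 2).
  apply/subset_leq_card/subsetP=> z; rewrite !inE => /andP[-> /and3P[_ _ ->]].
  by [].
by move: nov; rewrite /overloaded vZ -leqNgt.
Qed.

Lemma ind_path_through_prune X : ind_path_through e Z X -> ind_path_through prune Z X.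
Proof.
case/ind_path_throughP=> t [pt ends sZt] ->; apply/ind_path_throughP; exists t => //.
split=> //; apply: (induced_path_restrict_rel _ pt).
apply/allP=> v vt /=; rewrite /overloaded negb_and negbK -leqNgt.
by rewrite (induced_path_degree pt vt sZt) orbT.
Qed.

Lemma n_paths_prune : n_paths e Z <= n_paths prune Z.
Proof.
by apply/subset_leq_card/subsetP=> X; rewrite !inE; apply: ind_path_through_prune.
Qed.

End Pruning.

Lemma path_close_cycle (T : eqType) (e : rel T) (x y a : T) p : symmetric e ->
  e x y -> path e a p -> e x a || e y a -> e x (last a p) || e y (last a p) ->
  exists h, [/\ uniq h, {subset h <= [:: x; y]}, 0 < size h & cycle e (h ++ a :: p)].
Proof.
move=> esym exy pa xya xyb.
have xy2 (v : T) : (x == v) || (y == v) -> v \in [:: x; y] by rewrite !inE !(eq_sym v).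
have [u bu uxy] : exists2 u, e (last a p) u & u \in [:: x; y].
  by case/orP: xyb => eb; [exists x | exists y]; rewrite 1?esym ?xy2 ?eqxx ?orbT.
have [w wa wxy] : exists2 w, e w a & w \in [:: x; y].
  by case/orP: xya => ea; [exists x | exists y]; rewrite ?xy2 ?eqxx ?orbT.
have [uw | uw] := eqVneq u w; [exists [:: u] | exists [:: u; w]].
  by subst w; split=> //=; [apply/allP; rewrite /= uxy | rewrite rcons_path wa pa bu].
split=> //=; [by rewrite inE uw | by apply/allP; rewrite /= uxy wxy |].
rewrite rcons_path wa pa bu !andbT.
by move: uxy wxy uw; rewrite !inE => /orP[]/eqP-> /orP[]/eqP->; rewrite ?eqxx // esym.
Qed.

Section Contraction.
Variables (T : finType) (e : rel T) (z1 z2 : T).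
Hypotheses (esym : symmetric e) (eirr : irreflexive e) (e12 : e z1 z2).

(* The edge z1z2 is contracted onto z1; z2 stays behind as an isolated vertex. *)
Definition contract : rel T := fun x y =>
  [&& x != z2, y != z2, x != y &
      e x y || (x == z1) && e z2 y || (y == z1) && e x z2].

Definition contract_vertex (v : T) : T := if v == z2 then z1 else v.

Lemma z1_neq_z2 : z1 != z2.
Proof. by apply: contraTneq e12 => ->; rewrite eirr. Qed.

Lemma contract_sym : symmetric contract.
Proof.
move=> x y; rewrite /contract (eq_sym y x) (esym y x) (esym z2 x) (esym y z2).
by case: (x == z1); case: (y == z1); case: (e x y); case: (e z2 y); case: (e x z2);
  case: (x != z2); case: (y != z2); case: (x != y).
Qed.

Lemma contract_irr : irreflexive contract.
Proof. by move=> x; rewrite /contract eqxx !andbF. Qed.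

Lemma contract_z2 y : contract z2 y = false.
Proof. by rewrite /contract eqxx. Qed.

Lemma contract_z1 y : y != z1 -> y != z2 -> contract z1 y = e z1 y || e z2 y.
Proof.
by move=> yz1 yz2; rewrite /contract z1_neq_z2 yz2 eq_sym yz1 eqxx (negbTE yz1) orbF.
Qed.

Lemma contract_other x y : x != z1 -> y != z1 -> x != z2 -> y != z2 ->
  contract x y = e x y.
Proof.
move=> xz1 yz1 xz2 yz2; rewrite /contract xz2 yz2 (negbTE xz1) (negbTE yz1) !orbF.
by have [->|] := eqVneq x y; rewrite ?eirr.
Qed.

Lemma contract_vertex_z1 : contract_vertex z1 = z1.
Proof. by rewrite /contract_vertex (negbTE z1_neq_z2). Qed.

Lemma contract_vertex_z2 : contract_vertex z2 = z1.
Proof. by rewrite /contract_vertex eqxx. Qed.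

Lemma contract_vertex_id x : x != z2 -> contract_vertex x = x.
Proof. by rewrite /contract_vertex => /negbTE ->. Qed.

Lemma contract_vertex_edge x y : e x y -> contract_vertex x != contract_vertex y ->
  contract (contract_vertex x) (contract_vertex y).
Proof.
rewrite /contract_vertex => exy.
have merged v : v != z1 -> v != z2 -> e z1 v || e z2 v -> contract z1 v.
  by move=> vz1 vz2; rewrite contract_z1.
case: (eqVneq x z2) => xz2; case: (eqVneq y z2) => yz2.
- by rewrite eqxx.
- by rewrite eq_sym => yz1; apply: merged => //; rewrite -xz2 exy orbT.
- by move=> xz1; rewrite contract_sym; apply: merged => //; rewrite -yz2 (esym y) exy orbT.
have [xz1 | xz1] := eqVneq x z1.
  by rewrite xz1 eq_sym in exy * => yz1; apply: merged => //; rewrite exy.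
have [yz1 _ | yz1 _] := eqVneq y z1; last by rewrite contract_other.
by rewrite yz1 in exy *; rewrite contract_sym; apply: merged => //; rewrite (esym z1) exy.
Qed.

Lemma z2_notin_cycle c : cycle contract c -> z2 \notin c.
Proof. by move=> cyc; apply/negP=> /(next_cycle cyc); rewrite contract_z2. Qed.

Definition untouched : pred T := [pred x | (x != z1) && (x != z2)].

Lemma eq_in_contract : {in untouched &, e =2 contract}.
Proof. by move=> x y /andP[xz1 xz2] /andP[yz1 yz2]; rewrite contract_other. Qed.

Lemma is_cycle_contract_avoiding c : is_cycle contract c -> z1 \notin c -> is_cycle e c.
Proof.
case/and3P=> uc szc cyc z1c; have z2c := z2_notin_cycle cyc.
have Pc : all untouched c.
  apply/allP=> x xc; apply/andP.
  by split; [apply: contraNneq z1c | apply: contraNneq z2c] => <-.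
by rewrite /is_cycle uc szc (eq_in_cycle eq_in_contract Pc).
Qed.

Lemma is_cycle_contract_through c : is_cycle contract c -> z1 \in c ->
  exists2 L, is_cycle e L & {in L, forall x, contract_vertex x \in c}.
Proof.
move=> cc z1c; have z2c : z2 \notin c by case/and3P: cc => _ _ /z2_notin_cycle.
case/rot_to: z1c => k p crot.
have memc x : x \in z1 :: p -> x \in c by rewrite -crot mem_rot.
move: cc; rewrite -(is_cycle_rot _ k) crot {crot}.
case: p memc => [|a p] memc; first by case/and3P.
case/and3P; rewrite cons_uniq => /andP[z1p up] szp.
rewrite /= rcons_path => /and3P[z1a pa bz1].
have Pap : all untouched (a :: p).
  apply/allP=> x xp; apply/andP; split; first by apply: contraNneq z1p => <-.
  by apply: contraNneq z2c => <-; apply: memc; rewrite inE xp orbT.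
have /andP[az1 az2] : untouched a by apply: (allP Pap); rewrite mem_head.
have /andP[bz1' bz2] : untouched (last a p) by apply: (allP Pap); rewrite mem_last.
rewrite contract_z1 // in z1a; rewrite contract_sym contract_z1 // in bz1.
have pe : path e a p by rewrite (eq_in_path eq_in_contract Pap).
have [h [uh hz h0 cych]] := path_close_cycle esym e12 pe z1a bz1.
have disj : ~~ has (mem h) (a :: p).
  apply/hasPn=> x /(allP Pap)/andP[xz1 xz2]; apply/negP=> /hz.
  by rewrite !inE (negbTE xz1) (negbTE xz2).
have szL : 2 < size (h ++ a :: p).
  by rewrite size_cat addnS ltnS (leq_add h0 (szp : 0 < size p)).
exists (h ++ a :: p); first by rewrite /is_cycle cych cat_uniq uh up disj szL.
move=> x; rewrite mem_cat => /orP[/hz | xp].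
  rewrite !inE => /orP[]/eqP ->;
  by rewrite (contract_vertex_z1, contract_vertex_z2) memc ?mem_head.
have /andP[_ xz2] := allP Pap x xp.
by rewrite contract_vertex_id // memc // inE xp orbT.
Qed.

Lemma is_cycle_contract_lift c : is_cycle contract c ->
  exists2 L, is_cycle e L & {in L, forall x, contract_vertex x \in c}.
Proof.
move=> cc; have [z1c | z1c] := boolP (z1 \in c); first exact: is_cycle_contract_through.
exists c; first exact: is_cycle_contract_avoiding.
have z2c : z2 \notin c by case/and3P: cc => _ _ /z2_notin_cycle.
by move=> x xc; rewrite contract_vertex_id //; apply: contraNneq z2c => <-.
Qed.

Lemma anticomplete_lift c d L M : anticomplete contract c d ->
  {in L, forall x, contract_vertex x \in c} -> {in M, forall y, contract_vertex y \in d} ->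
  anticomplete e L M.
Proof.
move=> anti Lc Md x y xL yM; have [ne nc] := anti _ _ (Lc x xL) (Md y yM).
split; first by apply: contra_neq ne => ->.
by apply: contra nc => exy; apply: contract_vertex_edge.
Qed.

Lemma sO_free_contract s : sO_free e s -> sO_free contract s.
Proof.
apply: (sO_free_transfer (lift := fun c L => {in L, forall x, contract_vertex x \in c})).
  exact: is_cycle_contract_lift.
exact: anticomplete_lift.
Qed.

Lemma cycle_hitting_contract (Z : {set T}) :
  z1 \in Z -> cycle_hitting e Z -> cycle_hitting contract (Z :\ z2).
Proof.
move=> z1Z hit c /is_cycle_contract_lift[L /hit[z zZ zL] Lc].
exists (contract_vertex z); last exact: Lc.
have [-> | zz2] := eqVneq z z2; first by rewrite contract_vertex_z2 !inE z1_neq_z2.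
by rewrite contract_vertex_id // !inE zz2.
Qed.

Lemma path_through_contract (Z : {set T}) t : z1 \in Z -> z2 \in Z ->
  path_through e Z t -> path_through contract (Z :\ z2) (rem z2 t).
Proof.
move=> z1Z z2Z [[ut adj] ends sZt]; have z1t := sZt _ z1Z; have z2t := sZt _ z2Z.
have hk : consecutive (index z2 t) (index z1 t) by rewrite -adj // esym.
have mem_rem x : (x \in rem z2 t) = (x != z2) && (x \in t) by rewrite mem_rem_uniq.
have idx_neq x y : x \in t -> y \in t -> x != y -> index x t != index y t.
  by move=> xt yt; apply: contra_neq; apply: index_inj.
split; [split | |].
- exact: rem_uniq.
- move=> x y; rewrite !mem_rem => /andP[xz2 xt] /andP[yz2 yt]; rewrite !index_rem //.
  have [-> | xz1] := eqVneq x z1; have [-> | yz1] := eqVneq y z1.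
  + by rewrite contract_irr consecutivenn.
  + by rewrite contract_z1 // !adj // (consecutive_unbump_merge hk) ?idx_neq.
  + rewrite contract_sym contract_z1 // consecutiveC !adj //.
    by rewrite (consecutive_unbump_merge hk) ?idx_neq.
  + by rewrite contract_other // adj // (consecutive_unbump hk) ?idx_neq.
- have lt1 : index z1 t < size t by rewrite index_mem.
  have lt2 : index z2 t < size t by rewrite index_mem.
  have sz : 0 < (size t).-1 by move: hk lt1 lt2; rewrite /consecutive; lia.
  have end_in i : i < size t -> i != index z2 t ->
      [|| i == 0, i == (size t).-1 | i == index z1 t] -> nth z1 t i \in Z :\ z2.
    move=> it iz2 ends_i; rewrite !inE -{1}(nth_index z1 z2t) nth_uniq ?index_mem // iz2 /=.
    move: ends; rewrite (ends_inE _ z1) => /and3P[_ e0 eN].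
    by case/or3P: ends_i => /eqP ->; rewrite ?nth_index.
  rewrite (ends_inE _ z1) size_rem // !nth_rem sz /=.
  by apply/andP; split; apply: end_in;
    move: hk; rewrite /bump /consecutive; case: leqP; lia.
- by move=> z; rewrite !inE mem_rem => /andP[-> /sZt].
Qed.

Lemma n_paths_contract (Z : {set T}) : z1 \in Z -> z2 \in Z ->
  n_paths e Z <= n_paths contract (Z :\ z2).
Proof.
move=> z1Z z2Z; apply: (n_paths_le (f := fun X => X :\ z2)) => [X Y | X].
  move=> /ind_path_throughP[t [_ _ sZt] ->] /ind_path_throughP[u [_ _ sZu] ->] eqXY.
  by rewrite -(setD1K (_ : z2 \in [set x in t])) ?inE ?sZt // eqXY setD1K // inE sZu.
case/ind_path_throughP=> t pt ->; apply/ind_path_throughP.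
exists (rem z2 t); first exact: path_through_contract.
by case: pt => [[ut _] _ _]; apply/setP=> x; rewrite !inE mem_rem_uniq.
Qed.

End Contraction.

Lemma stable_plantation s (T : finType) (e : rel T) (Z : {set T}) :
  symmetric e -> irreflexive e -> plantation e s Z ->
  exists (e' : rel T) (Z' : {set T}),
    [/\ symmetric e', irreflexive e', plantation e' s Z' & stable e' Z'] /\
    #|Z'| <= #|Z| /\ n_paths e Z <= n_paths e' Z'.
Proof.
have [m] := ubnP #|Z|; elim: m e Z => // m IHm e Z ltZm esym eirr [free hit].
case: (pickP [pred p : T * T | [&& p.1 \in Z, p.2 \in Z & e p.1 p.2]]) => [[z1 z2] | stab].
  case/and3P=> /= z1Z z2Z e12.
  have [||||e' [Z' [reduced [leZ len]]]] := IHm (contract e z1 z2) (Z :\ z2).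
  - by move: ltZm; rewrite (cardsD1 z2 Z) z2Z.
  - exact: contract_sym.
  - exact: contract_irr.
  - by split; [apply: sO_free_contract | apply: cycle_hitting_contract].
  exists e', Z'; split=> //; split.
    by apply: leq_trans leZ _; apply/subset_leq_card/subsetDl.
  by apply: leq_trans len; apply: n_paths_contract.
exists e, Z; split=> //; split=> // x y xZ yZ.
by apply/negP=> exy; have := stab (x, y); rewrite /= xZ yZ exy.
Qed.

Theorem mainTheorem16 (s : nat) (hs : 1 <= s)
  (T : finType) (e : rel T) (esym : symmetric e) (eirr : irreflexive e)
  (Z : {set T}) (hZ : plantation e s Z) :
  exists (T' : finType) (e' : rel T') (Z' : {set T'}),
    [/\ symmetric e', irreflexive e', plantation e' s Z' & dyadic e' Z'] /\
    [/\ #|T'| <= #|T|, #|Z'| <= #|Z| & n_paths e Z <= n_paths e' Z'].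
Proof.
have [e1 [Z1 [[sym1 irr1 plant1 stab1] [leZ len]]]] := stable_plantation esym eirr hZ.
exists T, (prune e1 Z1), Z1; split; split=> //.
- exact: restrict_rel_sym.
- exact: restrict_rel_irr.
- exact: prune_plantation.
- exact: prune_dyadic.
- exact: leq_trans len (n_paths_prune _ _).
Qed.
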